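(* Let $k$ be a number field, $\mathbf{G}$ a linear $k$--algebraic group, and $\mathbf{H}$ a closed $k$--algebraic subgroup of $\mathbf{G}$ such that every finite index subgroup of $\mathbf{H}(\mathcal{O}_k)$ is a congruence subgroup. Then a subgroup of $\mathbf{H}(\mathcal{O}_k)$ is separable in $\mathbf{H}(\mathcal{O}_k)$ if and only if it is separable in $\mathbf{G}(\mathcal{O}_k)$.
   Context: A linear $k$--algebraic group is a Zariski closed subgroup $\mathbf{G}\subseteq\mathrm{GL}(m;\bar k)$ whose ideal of vanishing is generated over $k$; for $\mathbf{H}\subseteq\mathbf{G}$ write $\mathbf{H}(\mathcal{O}_k)=\mathbf{H}\cap\mathrm{GL}(m;\mathcal{O}_k)$, where $\mathcal{O}_k$ is the ring of integers. For an ideal $\mathfrak{b}$ of $\mathcal{O}_k$, the kernel of the reduction map $\mathbf{H}(\mathcal{O}_k)\to\mathbf{H}(\mathcal{O}_k/\mathfrak{b})$ is a principal congruence subgroup; a congruence subgroup is a subgroup of $\mathbf{H}(\mathcal{O}_k)$ containing some principal congruence subgroup. A subgroup $H$ of a group $G$ is separable if for every $g\in G\setminus H$ there is a finite index subgroup of $G$ containing $H$ but not $g$. *)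

From HB Require Import structures.
From mathcomp Require Import all_boot all_order all_algebra all_field.
From mathcomp Require Import mpoly.
Set Implicit Arguments. Unset Strict Implicit. Unset Printing Implicit Defensive.
Import Order.TTheory GRing.Theory Num.Theory.
Local Open Scope ring_scope.

(* A number field, realised as a subfield of algC (every number field embeds
   in algC = \bar Q; algC is then an algebraic closure of k). *)
Definition number_field (k : algC -> Prop) : Prop :=
  [/\ (k 0 /\ k 1),
      (forall x y, k x -> k y -> k (x - y)),
      (forall x y, k x -> k y -> k (x * y)),
      (forall x, k x -> k x^-1) &
      (exists (n : nat) (b : 'I_n -> algC),
        forall x, k x -> exists c : 'I_n -> rat, x = \sum_(i < n) ratr (c i) * b i)].

Definition ring_of_integers (k : algC -> Prop) (x : algC) : Prop :=
  k x /\ x \in Aint.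

Definition mset (m : nat) := 'M[algC]_m -> Prop.

Definition mxeval (m : nat) (p : {mpoly algC[m * m]}) (A : 'M[algC]_m) : algC :=
  p.@[fun i => mxvec A 0 i].

Definition is_subgroup (m : nat) (K Gam : mset m) : Prop :=
  [/\ (forall A, K A -> Gam A), K 1%:M,
      (forall A B, K A -> K B -> K (A *m B)) &
      (forall A, K A -> K (invmx A))].

Definition zariski_closed_in_GL (m : nat) (G : mset m) : Prop :=
  exists S : {mpoly algC[m * m]} -> Prop,
    forall A, G A <-> (A \in unitmx /\ forall p, S p -> mxeval p A = 0).

Definition vanishing_ideal (m : nat) (G : mset m) (p : {mpoly algC[m * m]}) : Prop :=
  forall A, G A -> mxeval p A = 0.

Definition ideal_defined_over (k : algC -> Prop) (m : nat) (G : mset m) : Prop :=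
  exists s : seq {mpoly algC[m * m]},
    [/\ (forall f, f \in s -> forall mo, k (f@_mo)),
        (forall f, f \in s -> vanishing_ideal G f) &
        (forall p, vanishing_ideal G p ->
           exists q : seq {mpoly algC[m * m]},
             p = \sum_(i < size s) q`_i * s`_i)].

Definition linear_k_group (k : algC -> Prop) (m : nat) (G : mset m) : Prop :=
  [/\ is_subgroup G (fun A => A \in unitmx), zariski_closed_in_GL G &
      ideal_defined_over k G].

Definition GL_Ok (k : algC -> Prop) (m : nat) (A : 'M[algC]_m) : Prop :=
  [/\ A \in unitmx, (forall i j, ring_of_integers k (A i j)) &
      (forall i j, ring_of_integers k (invmx A i j))].

Definition int_points (k : algC -> Prop) (m : nat) (H : mset m) : mset m :=
  fun A => H A /\ GL_Ok k A.

Definition Ok_ideal (k : algC -> Prop) (b : algC -> Prop) : Prop :=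
  [/\ (forall x, b x -> ring_of_integers k x), b 0,
      (forall x y, b x -> b y -> b (x + y)) &
      (forall r x, ring_of_integers k r -> b x -> b (r * x))].

Definition principal_congruence (k : algC -> Prop) (m : nat) (H : mset m)
    (b : algC -> Prop) : mset m :=
  fun A => int_points k H A /\ forall i j, b ((A - 1%:M) i j).

Definition congruence_subgroup (k : algC -> Prop) (m : nat) (H : mset m)
    (K : mset m) : Prop :=
  is_subgroup K (int_points k H) /\
  exists b, [/\ Ok_ideal k b, (exists x, b x /\ x <> 0) &
             (forall A, principal_congruence k H b A -> K A)].

Definition finite_index_subgroup (m : nat) (K Gam : mset m) : Prop :=
  is_subgroup K Gam /\
  exists s : seq 'M[algC]_m, (forall h, h \in s -> Gam h) /\
    forall g, Gam g -> exists2 h, h \in s & K (invmx h *m g).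

Definition separable_in (m : nat) (Lam Gam : mset m) : Prop :=
  forall g, Gam g -> ~ Lam g ->
    exists K, [/\ finite_index_subgroup K Gam, (forall A, Lam A -> K A) & ~ K g].

From HB Require Import structures.
From mathcomp Require Import all_boot all_order all_algebra all_field.
From mathcomp Require Import mpoly.
From mathcomp Require Import ring zify.
From Stdlib Require Import Classical.
Set Implicit Arguments. Unset Strict Implicit. Unset Printing Implicit Defensive.
Import Order.TTheory GRing.Theory Num.Theory.
Local Open Scope ring_scope.

(* Restricting a finite index subgroup of G(O_k) to H(O_k) keeps it of finite
   index, which gives one implication.  Conversely, let g be in G(O_k) but not
   in L.  If g lies in H, separability in H(O_k) and the congruence subgroup
   property give a subgroup K of H(O_k) containing L and the principal
   congruence subgroup of some level b, but not g; the elements of G(O_k) that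
   are congruent mod b to an element of K form a finite index subgroup of
   G(O_k) containing L but not g.  If g is not in H, some polynomial F with
   coefficients in O_k vanishes on H with c = F(g) <> 0, and the elements of
   G(O_k) congruent mod 2c to an element of H(O_k) do not include g, since
   otherwise c would lie in 2c O_k and 1/2 would be an algebraic integer.
   Both subgroups have finite index because O_k/N O_k is finite: modulo a
   prime p, O_k is spanned by any maximal family of elements that is linearly
   independent mod p, and such families have at most [k : Q] elements. *)

Lemma exists_last_nat (P : nat -> Prop) (n : nat) :
  P 0%N -> (forall t, P t -> (t <= n)%N) -> exists t, P t /\ ~ P t.+1.
Proof.
move=> P0 bounded; apply: NNPP => no_last.
suff Pall t : P t by have := bounded _ (Pall n.+1); rewrite ltnn.
elim: t => // t Pt; apply: NNPP => nPt1; apply: no_last; by exists t.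
Qed.

Lemma rat_clear_denominators r (v : 'I_r -> rat) :
  exists2 d : int, d != 0 & exists a : 'I_r -> int, forall j, (a j)%:~R = d%:~R * v j.
Proof.
exists (\prod_j denq (v j)).
  by rewrite prodf_seq_neq0; apply/allP => j _; exact: denq_neq0.
exists (fun j => numq (v j) * \prod_(l | l != j) denq (v l)) => j.
by rewrite [in RHS](bigD1 j) //= !intrM numqE; ring.
Qed.

Lemma Aint_double_neq1 z : z \in Aint -> 2 * z != 1.
Proof.
move=> Az; apply/negP => /eqP z2.
have zQ : z \in Crat.
  have two0 : (2 : algC) != 0 by rewrite pnatr_eq0.
  have -> : z = 2^-1 by apply: (mulfI two0); rewrite z2 mulfV.
  by rewrite rpredV rpred_nat.
have /intrP [n zn] := Cint_rat_Aint zQ Az.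
have : ((2 * n)%:~R : algC) = 1%:~R by rewrite intrM -zn z2.
by move/intr_inj; lia.
Qed.

Lemma invmxM (R : comUnitRingType) n (A B : 'M[R]_n) :
  A \in unitmx -> B \in unitmx -> invmx (A *m B) = invmx B *m invmx A.
Proof.
move=> uA uB; have uAB : A *m B \in unitmx by rewrite unitmx_mul uA.
have inv : A *m B *m (invmx B *m invmx A) = 1%:M.
  by rewrite mulmxA -(mulmxA A) (mulmxV uB) mulmx1 mulmxV.
by rewrite -[LHS]mulmx1 -inv mulmxA mulVmx // mul1mx.
Qed.

Section Subgroups.

Variable m : nat.
Implicit Types K Gam Lam : mset m.

Lemma finite_index_by_classes K Gam (U : eqType) (s : seq U)
    (R : U -> 'M[algC]_m -> Prop) :
  is_subgroup K Gam ->
  (forall g, Gam g -> exists2 u, u \in s & R u g) ->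
  (forall u x g, u \in s -> Gam x -> Gam g -> R u x -> R u g -> K (invmx x *m g)) ->
  finite_index_subgroup K Gam.
Proof.
move=> sK cover same_class; split => //.
have [reps [reps_Gam reps_cover]] : exists reps : seq 'M_m,
    (forall x, x \in reps -> Gam x) /\
    forall u, u \in s -> (exists2 x, Gam x & R u x) -> exists2 x, x \in reps & R u x.
  elim: s {cover same_class} => [|u0 s [reps [reps_Gam reps_cover]]].
    by exists [::].
  have [[x0 Gx0 Rx0]|no_rep] := classic (exists2 x, Gam x & R u0 x).
    exists (x0 :: reps); split => [x|u]; rewrite inE.
      by case/predU1P => [->|]; [| exact: reps_Gam].
    case/predU1P => [-> _|us ex]; first by exists x0; rewrite ?mem_head.
    by have [x xr Rx] := reps_cover u us ex; exists x; rewrite // inE xr orbT.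
  exists reps; split => // u; rewrite inE => /predU1P [-> ex|]; first by case: (no_rep ex).
  exact: reps_cover.
exists reps; split => // g Gg.
have [u us Rug] := cover g Gg.
have [x xr Rux] := reps_cover u us (ex_intro2 _ _ g Gg Rug).
by exists x => //; exact: same_class us (reps_Gam x xr) Gg Rux Rug.
Qed.

Lemma finite_index_subgroupI K Gam Gam' :
  (forall A, Gam' A -> Gam A) -> (forall A, Gam A -> A \in unitmx) ->
  is_subgroup Gam' Gam' -> finite_index_subgroup K Gam ->
  finite_index_subgroup (fun A => K A /\ Gam' A) Gam'.
Proof.
move=> sub unit [_ G'1 G'M G'V] [[KG K1 KM KV] [s [sG cover]]].
apply: (finite_index_by_classes (s := s) (R := fun h x => K (invmx h *m x))).
- split=> [A []|| A B [KA G'A] [KB G'B] | A [KA G'A]] //; split; auto.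
- by move=> g G'g; exact: cover (sub g G'g).
move=> h x g hs G'x G'g Khx Khg; split; last by apply: G'M => //; exact: G'V.
have uh := unit h (sG h hs); have ux := unit x (sub x G'x).
have -> : invmx x *m g = invmx (invmx h *m x) *m (invmx h *m g).
  by rewrite invmxM ?unitmx_inv // invmxK -mulmxA (mulmxA h) mulmxV // mul1mx.
by apply: KM => //; exact: KV.
Qed.

Lemma separable_in_sub Lam Gam Gam' :
  (forall A, Gam' A -> Gam A) -> (forall A, Gam A -> A \in unitmx) ->
  is_subgroup Gam' Gam' -> (forall A, Lam A -> Gam' A) ->
  separable_in Lam Gam -> separable_in Lam Gam'.
Proof.
move=> sub unit sG' LG' sep g G'g nLg.
have [K [fK LK nKg]] := sep g (sub g G'g) nLg.
exists (fun A => K A /\ Gam' A); split.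
- exact: (finite_index_subgroupI sub unit sG' fK).
- by move=> A LA; split; [exact: LK | exact: LG'].
- by case.
Qed.

End Subgroups.

Lemma k_defined_separating_poly k m (H : mset m) g :
  zariski_closed_in_GL H -> ideal_defined_over k H -> g \in unitmx -> ~ H g ->
  exists f, [/\ forall mo, k f@_mo, vanishing_ideal H f & mxeval f g != 0].
Proof.
move=> [S HS] [s [s_k s_van s_gen]] ug nHg.
have [q [Sq qg]] : exists q, S q /\ mxeval q g <> 0.
  apply: NNPP => none; apply: nHg; apply/HS; split => // q Sq.
  by apply: NNPP => qg; apply: none; exists q.
have [c qE] := s_gen q (fun A HA => ((HS A).1 HA).2 q Sq).
have [i [lt_i_s sig]] : exists i, (i < size s)%N /\ mxeval s`_i g != 0.
  apply: NNPP => none; apply: qg; rewrite qE /mxeval raddf_sum /= big1 // => i _.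
  rewrite mevalM; have : mxeval s`_i g = 0.
    by apply: NNPP => sig; apply: none; exists i; split => //; apply/eqP.
  by rewrite /mxeval => ->; rewrite mulr0.
have s_i := mem_nth 0 lt_i_s.
by exists s`_i; split => //; [exact: s_k | exact: s_van].
Qed.

Section NumberField.

Variable k : algC -> Prop.
Hypothesis hk : number_field k.
Local Notation Ok := (ring_of_integers k).

Lemma nf0 : k 0. Proof. by case: hk => -[]. Qed.
Lemma nf1 : k 1. Proof. by case: hk => -[]. Qed.
Lemma nf_sub x y : k x -> k y -> k (x - y). Proof. by case: hk => _ + _ _ _; apply. Qed.
Lemma nf_mul x y : k x -> k y -> k (x * y). Proof. by case: hk => _ _ + _ _; apply. Qed.
Lemma nf_inv x : k x -> k x^-1. Proof. by case: hk => _ _ _ + _; apply. Qed.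

Lemma nf_opp x : k x -> k (- x).
Proof. by move=> kx; rewrite -sub0r; apply: nf_sub => //; exact: nf0. Qed.

Lemma nf_add x y : k x -> k y -> k (x + y).
Proof. by move=> kx ky; rewrite -[y]opprK; apply: nf_sub => //; exact: nf_opp. Qed.

Lemma nf_nat n : k n%:R.
Proof. elim: n => [|n IH]; [exact: nf0 | rewrite mulrS; exact: nf_add nf1 IH]. Qed.

Lemma nf_int (z : int) : k z%:~R.
Proof. case: z => n; [exact: nf_nat | rewrite NegzE mulrNz; exact/nf_opp/nf_nat]. Qed.

Lemma nf_exp x n : k x -> k (x ^+ n).
Proof. move=> kx; elim: n => [|n IH]; [exact: nf1 | rewrite exprS; exact: nf_mul]. Qed.

Lemma Ok_add x y : Ok x -> Ok y -> Ok (x + y).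
Proof. by case=> kx Ax [ky Ay]; split; [exact: nf_add | exact: rpredD]. Qed.

Lemma Ok_opp x : Ok x -> Ok (- x).
Proof. by case=> kx Ax; split; [exact: nf_opp | rewrite rpredN]. Qed.

Lemma Ok_sub x y : Ok x -> Ok y -> Ok (x - y).
Proof. by move=> Ox Oy; apply: Ok_add => //; exact: Ok_opp. Qed.

Lemma Ok_mul x y : Ok x -> Ok y -> Ok (x * y).
Proof. by case=> kx Ax [ky Ay]; split; [exact: nf_mul | exact: rpredM]. Qed.

Lemma Ok_int (z : int) : Ok z%:~R.
Proof. by split; [exact: nf_int | exact: Aint_int]. Qed.

Lemma Ok_nat n : Ok n%:R. Proof. exact: Ok_int n. Qed.
Lemma Ok0 : Ok 0. Proof. exact: Ok_nat 0. Qed.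
Lemma Ok1 : Ok 1. Proof. exact: Ok_nat 1. Qed.

Lemma Ok_exp x n : Ok x -> Ok (x ^+ n).
Proof. move=> Ox; elim: n => [|n IH]; [exact: Ok1 | rewrite exprS; exact: Ok_mul]. Qed.

Lemma Ok_sum I (r : seq I) (P : pred I) (F : I -> algC) :
  (forall i, P i -> Ok (F i)) -> Ok (\sum_(i <- r | P i) F i).
Proof. by move=> OF; apply: big_ind => //; [exact: Ok0 | exact: Ok_add]. Qed.

Lemma Ok_prod I (r : seq I) (P : pred I) (F : I -> algC) :
  (forall i, P i -> Ok (F i)) -> Ok (\prod_(i <- r | P i) F i).
Proof. by move=> OF; apply: big_ind => //; [exact: Ok1 | exact: Ok_mul]. Qed.

Lemma nf_rat_dependent : exists n : nat, forall r (e : 'I_r -> algC),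
  (n < r)%N -> (forall j, k (e j)) ->
  exists2 v : 'I_r -> rat, (exists j, v j != 0) & \sum_j ratr (v j) * e j = 0.
Proof.
case: hk => _ _ _ _ [n [b span]]; exists n => r e ltnr ke.
have /fin_all_exists [C eC] : forall j : 'I_r,
    exists c : 'I_n -> rat, e j = \sum_i ratr (c i) * b i by move=> j; exact: span.
pose M : 'M[rat]_(r, n) := \matrix_(j, i) C j i.
have /matrix0Pn [i0 [j0 nz]] : kermx M != 0.
  rewrite kermx_eq0; apply: contraTN ltnr => /eqP <-.
  by rewrite -leqNgt rank_leq_col.
exists (fun j => kermx M i0 j); first by exists j0.
have kerM i : \sum_j kermx M i0 j * C j i = 0.
  transitivity ((kermx M *m M) i0 i); last by rewrite mulmx_ker mxE.
  by rewrite mxE; apply: eq_bigr => j _; rewrite [M j i]mxE.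
under eq_bigr do rewrite eC mulr_sumr.
rewrite exchange_big big1 //= => i _.
transitivity (ratr (\sum_j kermx M i0 j * C j i) * b i).
  by rewrite rmorph_sum mulr_suml; apply: eq_bigr => j _; rewrite rmorphM mulrA.
by rewrite kerM rmorph0 mul0r.
Qed.

Lemma nf_int_dependent : exists n : nat, forall r (e : 'I_r -> algC),
  (n < r)%N -> (forall j, k (e j)) ->
  exists2 a : 'I_r -> int, (exists j, a j != 0) & \sum_j (a j)%:~R * e j = 0.
Proof.
have [n dep] := nf_rat_dependent; exists n => r e ltnr ke.
have [v [j0 vj0] rel] := dep r e ltnr ke.
have [d d0 [a ad]] := rat_clear_denominators v.
exists a.
  by exists j0; rewrite -(intr_eq0 rat) ad mulf_neq0 ?intr_eq0.
transitivity (ratr d%:~R * \sum_j ratr (v j) * e j); last by rewrite rel mulr0.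
rewrite mulr_sumr; apply: eq_bigr => j _.
by rewrite mulrA -rmorphM /= -ad rmorph_int.
Qed.

Lemma nf_int_primitive_dependent : exists n : nat, forall r (e : 'I_r -> algC),
  (n < r)%N -> (forall j, k (e j)) ->
  exists2 a : 'I_r -> int, (forall d, (1 < d)%N -> exists j, ~~ (d%:Z %| a j)%Z)
    & \sum_j (a j)%:~R * e j = 0.
Proof.
have [n dep] := nf_int_dependent; exists n => r e ltnr ke.
have [a [j0 aj0] rel] := dep r e ltnr ke.
pose g := (\big[gcdn/0]_j `|a j|)%N.
have g_dvd j : (g %| `|a j|)%N by apply: (biggcdn_inf j).
have g_gt0 : (0 < g)%N.
  rewrite lt0n; apply: contra aj0 => /eqP g0.
  by move: (g_dvd j0); rewrite g0 dvd0n absz_eq0.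
have aE j : a j = (a j %/ g)%Z * g by rewrite divzK // dvdzE.
exists (fun j => (a j %/ g)%Z).
  move=> d d_gt1; apply: NNPP => all_dvd.
  have : (d * g %| g)%N.
    apply/dvdn_biggcdP => j _; rewrite aE abszM absz_nat dvdn_mul //.
    rewrite -(absz_nat d) -dvdzE; apply: NNPP => ndvd.
    by apply: all_dvd; exists j; apply/negP.
  by move/(dvdn_leq g_gt0); nia.
have g0 : (g%:R : algC) != 0 by rewrite pnatr_eq0 -lt0n.
apply: (mulIf g0); rewrite mul0r -[RHS]rel mulr_suml; apply: eq_bigr => j _.
by rewrite [in RHS]aE intrM mulrAC.
Qed.

Lemma nf_int_poly_root c : k c ->
  exists2 q : {poly algC}, q != 0 & q \is a polyOver Num.int /\ root q c.
Proof.
move=> kc; have [n dep] := nf_int_dependent.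
have [a [j0 aj0] rel] := dep n.+1 (fun j => c ^+ j) (ltnSn n) (fun j => nf_exp j kc).
exists (\poly_(i < n.+1) (a (inord i))%:~R).
  apply: contra_neq aj0 => /(congr1 (fun q : {poly algC} => q`_j0)).
  by rewrite coef_poly ltn_ord inord_val coef0 => /eqP; rewrite intr_eq0 => /eqP.
split; first by apply/polyOver_poly => i _; exact: rpred_int.
apply/eqP; rewrite horner_poly -[RHS]rel; apply: eq_bigr => i _; by rewrite inord_val.
Qed.

(* With [l = lead_coef q] and [n = (size q).-1], [l * y] is a root of the
   monic integral polynomial [X^n + \sum_(i < n) q_i l^(n-1-i) X^i]. *)
Lemma lead_coef_root_Aint (q : {poly algC}) y :
  q \is a polyOver Num.int -> root q y -> lead_coef q * y \in Aint.
Proof.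
move=> /polyOverP qZ qy; pose l := lead_coef q.
have lZ : l \is a Num.int by exact: qZ.
have [->|q0] := eqVneq q 0; first by rewrite lead_coef0 mul0r rpred0.
case sq : (size q) => [|[|t]]; first by move/eqP: sq; rewrite size_poly_eq0 (negPf q0).
  move: qy q0; rewrite /root horner_coef sq big_ord1 expr0 mulr1.
  by rewrite -lead_coef_eq0 /lead_coef sq /= => ->.
pose r : {poly algC} := 'X^(t.+1) + \poly_(i < t.+1) (q`_i * l ^+ (t - i)).
apply: (@root_monic_Aint r).
- rewrite /root /r hornerD hornerXn horner_poly.
  have -> : \sum_(i < t.+1) q`_i * l ^+ (t - i) * (l * y) ^+ i
       = l ^+ t * \sum_(i < t.+1) q`_i * y ^+ i.
    rewrite mulr_sumr; apply: eq_bigr => i _.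
    have -> : l ^+ t = l ^+ (t - i) * l ^+ i by rewrite -exprD subnK // -ltnS.
    by rewrite exprMn; ring.
  move: qy; rewrite /root horner_coef sq big_ord_recr /= addr_eq0 => /eqP ->.
  have -> : q`_t.+1 = l by rewrite /l /lead_coef sq.
  by rewrite -/l exprMn exprS; apply/eqP; ring.
- rewrite /r monicE lead_coefDl ?lead_coefXn // size_polyXn.
  exact: leq_ltn_trans (size_poly _ _) _.
- apply/polyOverP => i; rewrite /r coefD coefXn coef_poly.
  apply: rpredD; first by case: (i == t.+1); [exact: rpred1 | exact: rpred0].
  by case: (i < t.+1)%N; [apply: rpredM; [exact: qZ | exact: rpredX] | exact: rpred0].
Qed.

Lemma nf_denominator y : k y -> exists2 d : nat, (0 < d)%N & Ok (d%:R * y).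
Proof.
move=> ky; have [q q0 [qZ qy]] := nf_int_poly_root ky.
have /intrP [z lz] : lead_coef q \is a Num.int by rewrite /lead_coef; move/polyOverP: qZ.
have z0 : z != 0.
  by apply: contra_neq q0 => z0; apply/eqP; rewrite -lead_coef_eq0 lz z0 mulr0z.
exists `|z|%N; first by rewrite absz_gt0.
have -> : (`|z|%N%:R : algC) * y = (sgz z)%:~R * (lead_coef q * y).
  by rewrite lz mulrA -intrM -abszEsg.
split; last by rewrite rpredM ?Aint_int ?lead_coef_root_Aint.
by apply: nf_mul; [exact: nf_int | rewrite lz; apply: nf_mul => //; exact: nf_int].
Qed.

Lemma nf_common_denominator (s : seq algC) : {in s, forall x, k x} ->
  exists2 d : nat, (0 < d)%N & {in s, forall x, Ok (d%:R * x)}.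
Proof.
elim: s => [|x s IH] ks; first by exists 1%N.
have [d d0 Od] := IH (fun y ys => ks y (mem_behead (s := x :: s) ys)).
have [e e0 Oe] := nf_denominator (ks x (mem_head x s)).
exists (e * d)%N => [|y]; first by rewrite muln_gt0 e0.
rewrite inE natrM => /predU1P [->|ys].
  by rewrite mulrAC; apply: Ok_mul => //; exact: Ok_nat.
by rewrite -mulrA; apply: Ok_mul; [exact: Ok_nat | exact: Od].
Qed.

Lemma Ok_mpoly_denominator n (f : {mpoly algC[n]}) : (forall mo, k f@_mo) ->
  exists2 d : nat, (0 < d)%N & forall mo, Ok (d%:R *: f)@_mo.
Proof.
move=> kf; have kcoef : {in [seq f@_mo | mo <- msupp f], forall x, k x}.
  by move=> _ /mapP [mo _ ->].
have [d d0 Od] := nf_common_denominator kcoef.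
exists d => // mo; rewrite mcoeffZ.
have [mo_f | /memN_msupp_eq0 ->] := boolP (mo \in msupp f).
  by apply: Od; exact: map_f.
by rewrite mulr0; exact: Ok0.
Qed.

Lemma Ok_dvd_nat c : Ok c -> c != 0 ->
  exists2 N : nat, (0 < N)%N & exists2 y, Ok y & N%:R = c * y.
Proof.
move=> [kc _] c0; have [d d0 Od] := nf_denominator (nf_inv kc).
by exists d => //; exists (d%:R * c^-1) => //; rewrite mulrCA mulfV ?mulr1.
Qed.

Section Ideal.

Variable b : algC -> Prop.
Hypothesis hb : Ok_ideal k b.

Lemma ideal_Ok x : b x -> Ok x. Proof. by case: hb => + _ _ _; apply. Qed.
Lemma ideal0 : b 0. Proof. by case: hb. Qed.
Lemma idealD x y : b x -> b y -> b (x + y). Proof. by case: hb => _ _ + _; apply. Qed.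
Lemma idealMl r x : Ok r -> b x -> b (r * x). Proof. by case: hb => _ _ _; apply. Qed.

Lemma idealMr r x : Ok r -> b x -> b (x * r).
Proof. by rewrite mulrC; exact: idealMl. Qed.

Lemma idealN x : b x -> b (- x).
Proof. by rewrite -mulN1r; apply: idealMl; exact/Ok_opp/Ok1. Qed.

Lemma ideal_sum I (r : seq I) (P : pred I) (F : I -> algC) :
  (forall i, P i -> b (F i)) -> b (\sum_(i <- r | P i) F i).
Proof. by move=> bF; apply: big_ind => //; [exact: ideal0 | exact: idealD]. Qed.

Lemma ideal_nat_multiple x : b x -> x != 0 ->
  exists2 N : nat, (0 < N)%N & forall z, Ok z -> b (N%:R * z).
Proof.
move=> bx x0; have [N N0 [y Oy Ny]] := Ok_dvd_nat (ideal_Ok bx) x0.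
by exists N => // z Oz; rewrite Ny -mulrA; apply: idealMr => //; exact: Ok_mul.
Qed.

End Ideal.

Definition principal_ideal (c x : algC) := exists2 y, Ok y & x = c * y.

Lemma principal_idealP c : Ok c -> Ok_ideal k (principal_ideal c).
Proof.
move=> Oc; split.
- by move=> _ [y Oy ->]; exact: Ok_mul.
- by exists 0; [exact: Ok0 | rewrite mulr0].
- by move=> _ _ [y Oy ->] [z Oz ->]; exists (y + z); [exact: Ok_add | rewrite mulrDr].
- by move=> r _ Or [y Oy ->]; exists (r * y); [exact: Ok_mul | rewrite mulrCA].
Qed.

Definition residue_cover (b : algC -> Prop) (R : seq algC) :=
  forall x, Ok x -> exists2 r, r \in R & b (x - r).

Section PrimeResidues.

Variable p : nat.
Hypothesis p_pr : prime p.

Definition p_independent r (e : 'I_r -> algC) :=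
  forall a : 'I_r -> int, principal_ideal p%:R (\sum_j (a j)%:~R * e j) ->
    forall j, (p%:Z %| a j)%Z.

Lemma p_independent_bounded : exists n, forall r (e : 'I_r -> algC),
  (forall j, Ok (e j)) -> p_independent e -> (r <= n)%N.
Proof.
have [n dep] := nf_int_primitive_dependent; exists n => r e Oe ind.
rewrite leqNgt; apply/negP => ltnr.
have [a prim rel] := dep r e ltnr (fun j => (Oe j).1).
have [j /negP] := prim p (prime_gt1 p_pr); apply; apply: ind.
by exists 0; [exact: Ok0 | rewrite rel mulr0].
Qed.

Definition cons_family t (x : algC) (e : 'I_t -> algC) : 'I_t.+1 -> algC :=
  fun j => if unlift ord0 j is Some i then e i else x.

Lemma sum_cons_family t x (e : 'I_t -> algC) (a : 'I_t.+1 -> int) :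
  \sum_j (a j)%:~R * cons_family x e j =
    (a ord0)%:~R * x + \sum_i (a (lift ord0 i))%:~R * e i.
Proof.
rewrite big_ord_recl /cons_family unlift_none; congr (_ + _).
by apply: eq_bigr => i _; rewrite liftK.
Qed.

Lemma maximal_p_independent : exists t (e : 'I_t -> algC),
  [/\ forall j, Ok (e j), p_independent e &
      forall x, Ok x -> ~ p_independent (cons_family x e)].
Proof.
have [n bounded] := p_independent_bounded.
pose P t := exists e : 'I_t -> algC, (forall j, Ok (e j)) /\ p_independent e.
have P0 : P 0%N by exists (fun _ => 0); split => [[]|a _ []].
have bP t : P t -> (t <= n)%N by case=> e [Oe ind]; exact: bounded Oe ind.
have [t [[e [Oe ind]] nPt1]] := exists_last_nat P0 bP.
exists t, e; split => // x Ox ind'; apply: nPt1; exists (cons_family x e).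
by split => // j; rewrite /cons_family; case: unlift.
Qed.

(* A relation [a0 x + \sum_i a_i e_i = p y] with [p] not dividing [a0];
   inverting [a0] modulo [p] by Bezout expresses [x] modulo [p] in the [e_i]. *)
Lemma p_independent_span t (e : 'I_t -> algC) x :
  p_independent e -> Ok x -> ~ p_independent (cons_family x e) ->
  exists c : 'I_t -> int, principal_ideal p%:R (x - \sum_i (c i)%:~R * e i).
Proof.
move=> ind Ox dep.
have [a [y Oy rel] [j ndvd]] : exists2 a : 'I_t.+1 -> int,
    principal_ideal p%:R (\sum_j (a j)%:~R * cons_family x e j) &
    exists j, ~~ (p%:Z %| a j)%Z.
  apply: NNPP => none; apply: dep => a rel j; apply: NNPP => /negP ndvd.
  by apply: none; exists a => //; exists j.
rewrite sum_cons_family in rel; set S := \sum_i _ in rel; pose a0 := a ord0.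
have SE : S = p%:R * y - a0%:~R * x by rewrite -rel; ring.
have a0_ndvd : ~~ (p%:Z %| a0)%Z.
  apply/negP => /dvdzP [c a0E].
  have tail_dvd i : (p%:Z %| a (lift ord0 i))%Z.
    apply: (ind (fun i => a (lift ord0 i))); exists (y - c%:~R * x).
      by apply: Ok_sub => //; apply: Ok_mul => //; exact: Ok_int.
    by rewrite -/S SE a0E intrM; ring.
  move: ndvd; case: (unliftP ord0 j) => [i ->|->]; first by rewrite tail_dvd.
  by rewrite -/a0 a0E dvdz_mull.
have [u [v uv]] := Bezoutz a0 p.
have coprime_a0p : gcdz a0 p = 1.
  apply/eqP; rewrite /gcdz absz_nat gcdnC eqz_nat -/(coprime _ _).
  by rewrite prime_coprime // -(absz_nat p) -dvdzE.
have uvC : u%:~R * a0%:~R + v%:~R * p%:R = 1 :> algC.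
  by rewrite -[p%:R]/(p%:Z%:~R) -!intrM -rmorphD /= uv coprime_a0p.
exists (fun i => - u * a (lift ord0 i)); exists (u%:~R * y + v%:~R * x).
  by apply: Ok_add; apply: Ok_mul => //; exact: Ok_int.
have -> : \sum_i ((- u * a (lift ord0 i))%:~R) * e i = - u%:~R * S.
  by rewrite mulr_sumr; apply: eq_bigr => i _; rewrite intrM rmorphN mulrA.
rewrite SE.
transitivity ((u%:~R * a0%:~R + v%:~R * p%:R) * x - - u%:~R * (p%:R * y - a0%:~R * x)).
  by rewrite uvC mul1r.
ring.
Qed.

Lemma Ok_residue_cover_prime : exists R, residue_cover (principal_ideal p%:R) R.
Proof.
have [t [e [Oe ind maximal]]] := maximal_p_independent.
pose F (w : {ffun 'I_t -> 'I_p}) := \sum_i (w i : nat)%:R * e i.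
exists (codom F) => x Ox.
have [c [y Oy xE]] := p_independent_span ind Ox (maximal x Ox).
have p0 : p%:Z != 0 by rewrite eqz_nat -lt0n prime_gt0.
have cmod i : (`|(c i %% p)%Z| < p)%N.
  by rewrite -ltz_nat gez0_abs ?modz_ge0 //; move: (ltz_mod (c i) p0); rewrite ger0_norm.
pose w : {ffun 'I_t -> 'I_p} := [ffun i => Ordinal (cmod i)].
exists (F w); first exact: codom_f.
exists (y + \sum_i ((c i %/ p)%Z)%:~R * e i).
  by apply: Ok_add => //; apply: Ok_sum => i _; apply: Ok_mul => //; exact: Ok_int.
have cE i : (c i)%:~R = ((c i %/ p)%Z)%:~R * p%:R + (w i : nat)%:R :> algC.
  rewrite ffunE /= {1}(divz_eq (c i) p) rmorphD rmorphM /=; congr (_ + _).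
  by rewrite -[in LHS](gez0_abs (modz_ge0 _ p0)).
have -> : x = p%:R * y + \sum_i (c i)%:~R * e i by rewrite -xE subrK.
rewrite /F mulrDr -addrA; congr (_ + _).
by rewrite mulr_sumr -sumrB; apply: eq_bigr => i _; rewrite cE; ring.
Qed.

End PrimeResidues.

Lemma Ok_residue_cover N : (0 < N)%N ->
  exists R, residue_cover (principal_ideal N%:R) R.
Proof.
elim/ltn_ind: N => N IH N_gt0.
have [N_le1 | N_gt1] := leqP N 1.
  have -> : N = 1%N by apply/eqP; rewrite eqn_leq N_le1 N_gt0.
  by exists [:: 0] => x Ox; exists 0; rewrite ?inE //; exists x; rewrite ?subr0 ?mul1r.
have p_pr := pdiv_prime N_gt1; set p := pdiv N in p_pr.
have NE : N%:R = (N %/ p)%:R * p%:R :> algC by rewrite -natrM divnK // pdiv_dvd.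
have M_gt0 : (0 < N %/ p)%N by rewrite divn_gt0 ?prime_gt0 // pdiv_leq.
have [RM coverM] := IH (N %/ p)%N (ltn_Pdiv (prime_gt1 p_pr) N_gt0) M_gt0.
have [Rp coverp] := Ok_residue_cover_prime p_pr.
exists [seq r + (N %/ p)%:R * s | r <- RM, s <- Rp] => x Ox.
have [r rR [y Oy xE]] := coverM x Ox.
have [s sR [z Oz yE]] := coverp y Oy.
exists (r + (N %/ p)%:R * s); first by apply/allpairsP; exists (r, s).
by exists z => //; rewrite NE -[x](subrK r) xE -[y](subrK s) yE; ring.
Qed.

End NumberField.

Section IntegralMatrices.

Variable k : algC -> Prop.
Hypothesis hk : number_field k.
Local Notation Ok := (ring_of_integers k).
Variable m : nat.

Definition Ok_mx (A : 'M[algC]_m) := forall i j, Ok (A i j).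

Lemma GL_Ok1 : GL_Ok k (1%:M : 'M[algC]_m).
Proof.
split; first exact: unitmx1.
- by move=> i j; rewrite mxE; exact: (Ok_nat hk).
- by move=> i j; rewrite invmx1 mxE; exact: (Ok_nat hk).
Qed.

Lemma GL_Ok_mul (A B : 'M[algC]_m) : GL_Ok k A -> GL_Ok k B -> GL_Ok k (A *m B).
Proof.
move=> [uA OA OA'] [uB OB OB']; split; first by rewrite unitmx_mul uA.
- by move=> i j; rewrite mxE; apply: Ok_sum => // l _; exact: (Ok_mul hk).
- by move=> i j; rewrite invmxM // mxE; apply: Ok_sum => // l _; exact: (Ok_mul hk).
Qed.

Lemma GL_Ok_inv (A : 'M[algC]_m) : GL_Ok k A -> GL_Ok k (invmx A).
Proof. by move=> [uA OA OA']; split; rewrite ?unitmx_inv ?invmxK. Qed.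

Lemma int_points_subgroup (G : mset m) : is_subgroup G (fun A => A \in unitmx) ->
  is_subgroup (int_points k G) (int_points k G).
Proof.
move=> [_ G1 GM GV]; split => //.
- by split; [exact: G1 | exact: GL_Ok1].
- by move=> A B [GA OA] [GB OB]; split; [exact: GM | exact: GL_Ok_mul].
- by move=> A [GA OA]; split; [exact: GV | exact: GL_Ok_inv].
Qed.

Lemma int_points_unit (G : mset m) A : int_points k G A -> A \in unitmx.
Proof. by case=> _ []. Qed.

Lemma int_points_Ok (G : mset m) A : int_points k G A -> Ok_mx A.
Proof. by case=> _ []. Qed.

Lemma int_points_Ok_inv (G : mset m) A : int_points k G A -> Ok_mx (invmx A).
Proof. by case=> _ []. Qed.

Definition mx_eqmod (b : algC -> Prop) (A B : 'M[algC]_m) := forall i j, b ((A - B) i j).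

Lemma mx_residue_cover b R : residue_cover k b R ->
  exists RM : seq 'M[algC]_m, forall A, Ok_mx A -> exists2 B, B \in RM & mx_eqmod b A B.
Proof.
move=> cover.
pose Mf (f : {ffun 'I_m * 'I_m -> 'I_(size R)}) : 'M[algC]_m :=
  \matrix_(i, j) R`_(f (i, j)).
exists (codom Mf) => A OA.
have /fin_all_exists [f fE] : forall ij : 'I_m * 'I_m,
    exists t : 'I_(size R), b (A ij.1 ij.2 - R`_t).
  move=> [i j]; have [r rR bAr] := cover _ (OA i j).
  by exists (Ordinal (etrans (index_mem r R) rR)); rewrite /= nth_index.
exists (Mf [ffun ij => f ij]); first exact: codom_f.
by move=> i j; rewrite !mxE ffunE; exact: (fE (i, j)).
Qed.

Lemma mxeval_Ok (F : {mpoly algC[m * m]}) A :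
  (forall mo, Ok F@_mo) -> Ok_mx A -> Ok (mxeval F A).
Proof.
move=> OF OA; rewrite /mxeval mevalE; apply: Ok_sum => // mo _.
apply: (Ok_mul hk) => //; apply: Ok_prod => // i _; apply: (Ok_exp hk).
by case/mxvec_indexP: i => i j; rewrite mxvecE.
Qed.

Section CongruenceModIdeal.

Variable b : algC -> Prop.
Hypothesis hb : Ok_ideal k b.

Lemma mx_eqmod_refl A : mx_eqmod b A A.
Proof. by move=> i j; rewrite subrr mxE; exact: (ideal0 hb). Qed.

Lemma mx_eqmod_sym A B : mx_eqmod b A B -> mx_eqmod b B A.
Proof. by move=> AB i j; rewrite -opprB mxE; exact: (idealN hk hb). Qed.

Lemma mx_eqmod_trans A B C : mx_eqmod b A B -> mx_eqmod b B C -> mx_eqmod b A C.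
Proof.
move=> AB BC i j; have -> : A - C = (A - B) + (B - C) by rewrite addrA subrK.
by rewrite mxE; exact: (idealD hb (AB i j) (BC i j)).
Qed.

Lemma mx_eqmod_mul A A' B B' : Ok_mx A' -> Ok_mx B ->
  mx_eqmod b A A' -> mx_eqmod b B B' -> mx_eqmod b (A *m B) (A' *m B').
Proof.
move=> OA' OB AA' BB' i j; rewrite !mxE -sumrB; apply: (ideal_sum hb) => l _.
have -> : A i l * B l j - A' i l * B' l j =
    (A - A') i l * B l j + A' i l * (B - B') l j by rewrite !mxE; ring.
exact: (idealD hb (idealMr hb (OB l j) (AA' i l)) (idealMl hb (OA' i l) (BB' l j))).
Qed.

Lemma mxeval_eqmod (F : {mpoly algC[m * m]}) A B :
  (forall mo, Ok F@_mo) -> Ok_mx A -> Ok_mx B -> mx_eqmod b A B ->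
  b (mxeval F A - mxeval F B).
Proof.
move=> OF OA OB AB.
pose Q x y := [/\ Ok x, Ok y & b (x - y)].
have QD x x' y y' : Q x x' -> Q y y' -> Q (x + y) (x' + y').
  case=> Ox Ox' bx [Oy Oy' by']; split; try exact: (Ok_add hk).
  by rewrite opprD addrACA; exact: (idealD hb).
have QM x x' y y' : Q x x' -> Q y y' -> Q (x * y) (x' * y').
  case=> Ox Ox' bx [Oy Oy' by']; split; try exact: (Ok_mul hk).
  have -> : x * y - x' * y' = (x - x') * y + x' * (y - y') by ring.
  exact: (idealD hb (idealMr hb Oy bx) (idealMl hb Ox' by')).
have Qrefl x : Ok x -> Q x x by move=> Ox; split; rewrite // subrr; exact: (ideal0 hb).
have QX n x x' : Q x x' -> Q (x ^+ n) (x' ^+ n).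
  move=> Qx; elim: n => [|n IH]; rewrite ?expr0 ?exprS; last exact: QM.
  exact: (Qrefl _ (Ok1 hk)).
suff [] : Q (mxeval F A) (mxeval F B) by [].
rewrite /mxeval !mevalE.
apply: (big_ind2 Q) => [||mo _]; [exact: (Qrefl _ (Ok0 hk)) | exact: (QD) |].
apply: (QM); first exact: (Qrefl).
apply: (big_ind2 Q) => [||i _]; [exact: (Qrefl _ (Ok1 hk)) | exact: (QM) |].
apply: (QX); case/mxvec_indexP: i => i j; rewrite !mxvecE; split => //.
by move: (AB i j); rewrite !mxE.
Qed.

End CongruenceModIdeal.

Section Saturation.

Variable G : mset m.
Hypothesis sG : is_subgroup G (fun A => A \in unitmx).
Variable b : algC -> Prop.
Hypothesis hb : Ok_ideal k b.

Definition mod_saturation (P : mset m) : mset m :=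
  fun A => int_points k G A /\ exists2 h, P h & mx_eqmod b A h.

Variable P : mset m.
Hypothesis sP : is_subgroup P (int_points k G).

Lemma sub_mod_saturation A : P A -> mod_saturation P A.
Proof.
case: sP => PG _ _ _ PA; split; first exact: PG.
by exists A => //; exact: mx_eqmod_refl.
Qed.

Lemma mod_saturation_subgroup : is_subgroup (mod_saturation P) (int_points k G).
Proof.
have [_ G1 GM GV] := int_points_subgroup sG; have [PG P1 PM PV] := sP.
split; first by move=> A [].
- by split => //; exists 1%:M => //; exact: mx_eqmod_refl.
- move=> A B [GA [h Ph Ah]] [GB [h' Ph' Bh']]; split; first exact: GM.
  exists (h *m h'); first exact: PM.
  by apply: mx_eqmod_mul => //; [exact: int_points_Ok (PG _ Ph) | exact: int_points_Ok GB].
- move=> A [GA [h Ph Ah]]; split; first exact: GV.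
  exists (invmx h); first exact: PV.
  have Gh := PG _ Ph; have uA := int_points_unit GA; have uh := int_points_unit Gh.
  have := mx_eqmod_mul hb (int_points_Ok (GM _ _ (GV _ GA) Gh)) (int_points_Ok_inv Gh)
    (mx_eqmod_mul hb (int_points_Ok_inv GA) (int_points_Ok GA) (mx_eqmod_refl hb _) Ah)
    (mx_eqmod_refl hb (invmx h)).
  by rewrite mulVmx // mul1mx -mulmxA mulmxV // mulmx1 => /(mx_eqmod_sym hb).
Qed.

Lemma mod_saturation_finite_index N : (0 < N)%N -> (forall z, Ok z -> b (N%:R * z)) ->
  finite_index_subgroup (mod_saturation P) (int_points k G).
Proof.
move=> N_gt0 bN; have [R coverN] := Ok_residue_cover hk N_gt0.
have cover : residue_cover k b R.
  by move=> x Ox; have [r rR [y Oy xr]] := coverN x Ox; exists r; rewrite // xr; exact: bN.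
have [RM coverRM] := mx_residue_cover cover.
have [_ _ GM GV] := int_points_subgroup sG; have [_ P1 _ _] := sP.
apply: (finite_index_by_classes (s := RM) (R := fun B A => mx_eqmod b A B)).
- exact: mod_saturation_subgroup.
- by move=> g Gg; exact: coverRM (int_points_Ok Gg).
move=> B x g _ Gx Gg xB gB; split; first by apply: GM => //; exact: GV.
exists 1%:M => //; rewrite -(mulVmx (int_points_unit Gx)).
apply: (mx_eqmod_mul hb (int_points_Ok_inv Gx) (int_points_Ok Gg) (mx_eqmod_refl hb _)).
exact: (mx_eqmod_trans hb gB (mx_eqmod_sym hb xB)).
Qed.

End Saturation.

Lemma congruence_subgroup_separation (G H K : mset m) g :
  is_subgroup G (fun A => A \in unitmx) -> is_subgroup H (fun A => A \in unitmx) ->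
  (forall A, H A -> G A) -> congruence_subgroup k H K -> int_points k H g -> ~ K g ->
  exists K', [/\ finite_index_subgroup K' (int_points k G),
    (forall A, K A -> K' A) & ~ K' g].
Proof.
move=> sG sH HG [sK [b [hb [x [bx x0]] congK]]] Hg nKg.
have [N N_gt0 bN] := ideal_nat_multiple hk hb bx (introN eqP x0).
have [KH K1 KM KV] := sK; have [_ _ HM HV] := int_points_subgroup sH.
have sKG : is_subgroup K (int_points k G).
  by split => // A /KH [/HG GA OA]; split.
exists (mod_saturation G b K); split.
- exact: (mod_saturation_finite_index sG hb sKG N_gt0 bN).
- exact: sub_mod_saturation.
case=> Gg [h Kh gh]; apply: nKg; have Hh := KH h Kh.
have hg : principal_congruence k H b (invmx h *m g).
  split; first by apply: HM => //; exact: HV.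
  have := mx_eqmod_mul hb (int_points_Ok_inv Hh) (int_points_Ok Gg) (mx_eqmod_refl hb _) gh.
  by rewrite mulVmx // (int_points_unit Hh).
by have := KM _ _ Kh (congK _ hg); rewrite mulmxA mulmxV ?mul1mx // (int_points_unit Hh).
Qed.

(* Reduction mod [2 F(g)] cannot send [g] to a zero of [F] unless [F(g) = 0]:
   otherwise [F(g) = 2 F(g) z] would make [z = 1/2] an algebraic integer. *)
Lemma mod_saturation_vanishing (G H : mset m) (F : {mpoly algC[m * m]}) g :
  (forall mo, Ok F@_mo) -> vanishing_ideal H F -> int_points k G g ->
  mod_saturation G (principal_ideal k (2 * mxeval F g)) (int_points k H) g ->
  mxeval F g = 0.
Proof.
move=> OF vanF Gg [_ [h [Hh Oh] gh]]; set c := mxeval F g.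
have Oc : Ok c := mxeval_Ok OF (int_points_Ok Gg).
have hb := principal_idealP hk (Ok_mul hk (Ok_nat hk 2) Oc).
have := mxeval_eqmod hb OF (int_points_Ok Gg) (int_points_Ok (conj Hh Oh)) gh.
rewrite -/c (vanF h Hh) subr0 => -[z [_ Az] cE].
have [//|c0] := eqVneq c 0.
have : 2 * z = 1 by apply: (mulfI c0); rewrite mulr1 [in RHS]cE; ring.
by move/eqP; rewrite (negPf (Aint_double_neq1 Az)).
Qed.

Lemma zariski_separation (G H : mset m) g :
  is_subgroup G (fun A => A \in unitmx) -> linear_k_group k H -> (forall A, H A -> G A) ->
  int_points k G g -> ~ H g ->
  exists K', [/\ finite_index_subgroup K' (int_points k G),
    (forall A, int_points k H A -> K' A) & ~ K' g].
Proof.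
move=> sG [sH zH iH] HG Gg nHg.
have [f [kf vanf fg]] := k_defined_separating_poly zH iH (int_points_unit Gg) nHg.
have [d d_gt0 OF] := Ok_mpoly_denominator hk kf.
set F := d%:R *: f in OF.
have vanF : vanishing_ideal H F.
  by move=> A HA; rewrite /mxeval mevalZ -/(mxeval f A) vanf // mulr0.
have Fg : mxeval F g != 0 by rewrite /mxeval mevalZ mulf_neq0 // pnatr_eq0 -lt0n.
set c := mxeval F g in Fg.
have O2c := Ok_mul hk (Ok_nat hk 2) (mxeval_Ok OF (int_points_Ok Gg)).
have hb := principal_idealP hk O2c.
have b2c : principal_ideal k (2 * c) (2 * c) by exists 1; [exact: (Ok1 hk) | rewrite mulr1].
have c2 : 2 * c != 0 by rewrite mulf_neq0 // pnatr_eq0.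
have [N N_gt0 bN] := ideal_nat_multiple hk hb b2c c2.
have sHG : is_subgroup (int_points k H) (int_points k G).
  by have [_ H1 HM HV] := int_points_subgroup sH; split => // A [/HG].
exists (mod_saturation G (principal_ideal k (2 * c)) (int_points k H)); split.
- exact: (mod_saturation_finite_index sG hb sHG N_gt0 bN).
- exact: sub_mod_saturation.
- by move/(mod_saturation_vanishing OF vanF Gg); apply/eqP.
Qed.

End IntegralMatrices.

Theorem mainTheorem11 (k : algC -> Prop) (m : nat) (G H : mset m) :
  number_field k ->
  linear_k_group k G ->
  linear_k_group k H ->
  (forall A, H A -> G A) ->
  (forall K, finite_index_subgroup K (int_points k H) -> congruence_subgroup k H K) ->
  forall L, is_subgroup L (int_points k H) ->
    (separable_in L (int_points k H) <-> separable_in L (int_points k G)).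
Proof.
move=> hk [sG _ _] kH HG congH L [LH _ _ _]; have [sH _ _] := kH.
split => [sepH g Gg nLg | sepG].
  have [Hg | nHg] := classic (H g).
    have Hg' : int_points k H g by case: Gg.
    have [K [fK LK nKg]] := sepH g Hg' nLg.
    have [K' [fK' KK' nK'g]] :=
      congruence_subgroup_separation hk sG sH HG (congH K fK) Hg' nKg.
    by exists K'; split => // A /LK /KK'.
  have [K' [fK' HK' nK'g]] := zariski_separation hk sG kH HG Gg nHg.
  by exists K'; split => // A /LH /HK'.
apply: separable_in_sub sepG => //.
- by move=> A [/HG GA OA]; split.
- by move=> A; exact: int_points_unit.
- exact: int_points_subgroup.
Qed.
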